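(* Let $p \in (0,\tfrac12)$ and $c\in(0,1)$ be constants. Every (possibly randomized, possibly adaptive) algorithm that solves FT-Min$(k)$ on $n$ elements with high probability, for $1 \le k \le c\cdot n$, performs an expected number of comparisons of $\Omega(\frac{n}{k}\log n)$ (on some input instance), where the hidden constant depends only on $p$ and $c$.
   Context: FT-Min$(k)$ (fault-tolerant approximate minimum selection): the input is a set $S$ of $n$ distinct elements of a totally ordered set; the algorithm can access the order only through pairwise comparisons. A comparison of distinct $x,y$ reports ''$x<y$'' or ''$x>y$'', and reports the wrong relation with probability (at most) $p$, independently of all other comparisons (repeated comparisons of the same pair are also independent). The goal is to output one of the $k$ smallest elements of $S$. An algorithm solves it with high probability if on every input it outputs one of the $k$ smallest elements with probability at least $1-\frac1n$. Algorithms may be randomized and adaptive. *)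

From HB Require Import structures.
From mathcomp Require Import all_boot all_order all_algebra all_fingroup.
From mathcomp Require Import all_classical all_reals all_analysis.
Set Implicit Arguments. Unset Strict Implicit. Unset Printing Implicit Defensive.
Import Order.TTheory GRing.Theory Num.Theory.
Local Open Scope ring_scope.

(* Model of a (randomized, adaptive) comparison algorithm on the elements
   'I_n (the labels of the n distinct input elements).
   The algorithm is a strategy: given the history of all bits observed so
   far (answers of comparisons and outcomes of its own coin flips) it chooses
   its next action:
   - [Output i]    : stop and output element i;
   - [Compare i j] : ask the noisy oracle whether "i < j";
   - [Flip q]      : flip a private coin that shows [true] with probability q.
   Arbitrary (even unbounded / non-terminating) strategies are allowed. *)
Inductive action (R : Type) (n : nat) :=
  | Output of 'I_n
  | Compare of 'I_n & 'I_n
  | Flip of R.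
Arguments Output {R n}.
Arguments Compare {R n}.
Arguments Flip {R n}.

Definition algorithm (R : Type) (n : nat) := seq bool -> action R n.

Definition valid_alg (R : realType) (n : nat) (A : algorithm R n) : Prop :=
  forall h q, A h = Flip q -> 0 <= q <= 1.

(* An input instance: a permutation [pi] giving the rank of each element in
   the (hidden) total order; element i is smaller than element j iff
   (pi i < pi j). The k smallest elements are those with rank < k. *)

Definition step_prob (R : realType) (n : nat) (p : R) (A : algorithm R n)
    (pi : 'S_n) (h : seq bool) (b : bool) : R :=
  match A h with
  | Output _ => 0
  | Compare i j => if b == (pi i < pi j)%N then 1 - p else p
  | Flip q => if b then q else 1 - q
  end.

Fixpoint prefix_prob_rec (R : realType) (n : nat) (p : R) (A : algorithm R n)
    (pi : 'S_n) (pre h : seq bool) : R :=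
  match h with
  | [::] => 1
  | b :: t => step_prob p A pi pre b * prefix_prob_rec p A pi (rcons pre b) t
  end.

Definition reach_prob (R : realType) (n : nat) (p : R) (A : algorithm R n)
    (pi : 'S_n) (h : seq bool) : R := prefix_prob_rec p A pi [::] h.

Definition is_compare (R : Type) (n : nat) (a : action R n) : bool :=
  if a is Compare _ _ then true else false.

Definition outputs_topk (R : Type) (n : nat) (pi : 'S_n) (k : nat)
    (a : action R n) : bool :=
  if a is Output i then (pi i < k)%N else false.

Definition expected_comparisons (R : realType) (n : nat) (p : R)
    (A : algorithm R n) (pi : 'S_n) : \bar R :=
  (\sum_(0 <= t <oo)
     (\sum_(h : t.-tuple bool | is_compare (A h)) reach_prob p A pi h)%:E)%E.

Definition success_prob (R : realType) (n : nat) (p : R) (A : algorithm R n)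
    (pi : 'S_n) (k : nat) : \bar R :=
  (\sum_(0 <= t <oo)
     (\sum_(h : t.-tuple bool | outputs_topk pi k (A h)) reach_prob p A pi h)%:E)%E.

Definition solves_ftmin_whp (R : realType) (n : nat) (p : R)
    (A : algorithm R n) (k : nat) : Prop :=
  forall pi : 'S_n, ((1 - n%:R^-1)%:E <= success_prob p A pi k)%E.

From Pilot Require Import Defs.
From HB Require Import structures.
From mathcomp Require Import all_boot all_order all_algebra all_fingroup.
From mathcomp Require Import all_classical all_reals all_analysis.
From mathcomp Require Import ring lra zify.
Set Implicit Arguments. Unset Strict Implicit. Unset Printing Implicit Defensive.
Import Order.TTheory GRing.Theory Num.Theory.
Local Open Scope ring_scope.

(* Change of measure.  Let r = (1 - p) / p.  If a run on input s1 makes at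
   most m comparisons whose true answers differ between inputs s1 and s2,
   it is at most r ^ m times likelier on s1 than on s2; the other runs have
   probability at most E / (m + 1) by Markov's inequality, E the expected
   number of such comparisons on s1.  Perturb the sorted input so that, on
   perturbation l, some answers W_l correct on the sorted input are wrong.
   Success with probability 1 - 1/n on every input makes outputs in W_l rare
   on perturbation l, hence, choosing r ^ m of order n, forces the run on the
   sorted input to make about m = Omega(log n) comparisons distinguishing it
   from perturbation l.  With n/k - 1 perturbations, each moving one block of
   k ranks to the front, and each comparison distinguishing at most two of
   them, this costs Omega((n/k) log n) comparisons; when k > n/2, boundedly
   many perturbations moving n - k of the k smallest to the end suffice. *)

Lemma sum_tuple0 (V : nmodType) (T : finType) (F : seq T -> V) :
  \sum_(h : 0.-tuple T) F h = F [::].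
Proof. by rewrite (big_pred1 [tuple]) // => h; rewrite [h]tuple0; apply/esym/eqP. Qed.

Lemma sum_tupleS (V : nmodType) (T : finType) t (F : seq T -> V) :
  \sum_(h : t.+1.-tuple T) F h = \sum_(x : T) \sum_(h : t.-tuple T) F (x :: h).
Proof.
rewrite pair_big (reindex (fun xh : T * t.-tuple T => [tuple of xh.1 :: xh.2])) //=.
exists (fun h : t.+1.-tuple T => (thead h, [tuple of behead h])).
  by case=> x h _; congr pair; apply: val_inj.
by move=> h _; apply: val_inj; rewrite /= [in RHS](tuple_eta h).
Qed.

(** * Rotated segments of ranks *)

Local Open Scope nat_scope.

(* Within [0, n), the ranks [e - t, e) move to the front of the segment
   [a, e), whose other ranks shift up by [t]. *)
Definition rot_rank (n a e t i : nat) : nat :=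
  if (a + t <= e) && (e <= n) then
    if i < a then i else if i < e - t then i + t else if i < e then i - (e - t - a) else i
  else i.

Lemma rot_rank_lt n a e t i : i < n -> rot_rank n a e t i < n.
Proof. by rewrite /rot_rank; repeat case: ifP; lia. Qed.

Lemma rot_rank_inj n a e t : injective (rot_rank n a e t).
Proof. by move=> i j; rewrite /rot_rank; repeat case: ifP; lia. Qed.

Lemma rot_rank_order n a e t i j :
  (i < j) != (rot_rank n a e t i < rot_rank n a e t j) ->
  (e - t <= i < e) || (e - t <= j < e).
Proof. by rewrite /rot_rank; repeat case: ifP; lia. Qed.

Lemma block_rot_rank_ge n k b i : k <= b -> b + k <= n -> i < n ->
  ~~ (b <= i < b + k) -> k <= rot_rank n 0 (b + k) k i.
Proof. by move=> *; rewrite /rot_rank; repeat case: ifP; lia. Qed.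

Lemma block_rot_order n k b i j :
  (i < j) != (rot_rank n 0 (b + k) k i < rot_rank n 0 (b + k) k j) ->
  (b <= i < b + k) || (b <= j < b + k).
Proof. by move/rot_rank_order; rewrite addnK. Qed.

Lemma window_rot_rank_ge n k a i : k <= n -> a + (n - k) <= k ->
  a <= i < a + (n - k) -> k <= rot_rank n a n (k - a) i.
Proof. by move=> *; rewrite /rot_rank; repeat case: ifP; lia. Qed.

Lemma mem_block_div k x i : 0 < k -> (x * k <= i < x * k + k) = (i %/ k == x).
Proof.
move=> k_gt0; rewrite eqn_leq leq_divRL // andbC; congr (_ && _).
by rewrite -[in RHS]ltnS ltn_divLR // mulSn addnC.
Qed.

Lemma mem_window s k i : 0 < s -> s <= k -> i < k ->
  minn (i %/ s * s) (k - s) <= i < minn (i %/ s * s) (k - s) + s.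
Proof.
move=> s_gt0 le_sk lt_ik; have := leq_divM i s; have := ltn_ceil i s_gt0.
by rewrite mulSn; move: (i %/ s * s) => x; lia.
Qed.

Lemma leq_mul4_pred_divn n k : 0 < k -> 2 * k <= n -> n <= 4 * (n %/ k).-1 * k.
Proof.
move=> k_gt0 le_2k_n; apply: ltnW (leq_trans (ltn_ceil n k_gt0) _).
have : 2 <= n %/ k by rewrite leq_divRL.
by rewrite leq_mul2r; lia.
Qed.

Local Open Scope ring_scope.

Definition rot_ord n a e t (i : 'I_n) : 'I_n := Ordinal (rot_rank_lt a e t (ltn_ord i)).

Lemma rot_ord_inj n a e t : injective (@rot_ord n a e t).
Proof. by move=> i j /(congr1 val)/rot_rank_inj/val_inj. Qed.

Definition rot_perm n a e t : 'S_n := perm (@rot_ord_inj n a e t).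

Lemma rot_permE n a e t i : rot_perm n a e t i = rot_rank n a e t i :> nat.
Proof. by rewrite permE. Qed.

Lemma sum_ord_eq_le1 (R : numDomainType) g y : \sum_(l < g) ((l : nat) == y)%:R <= 1 :> R.
Proof.
rewrite (eq_bigr (fun l : 'I_g => if (l : nat) == y then 1 else 0)) => [|l _]; last first.
  by case: eqP.
by rewrite -big_mkcond (big_ord1_eq _ (fun=> 1)); case: ifP; rewrite ?ler01.
Qed.

Lemma natr_ge_inv_sqr (R : realType) (a : R) n : 0 < a <= 1 ->
  (Num.Def.trunc (a ^-2) < n)%N -> a ^-2 <= n%:R /\ 1 <= a * n%:R.
Proof.
case/andP=> a_gt0 a_le1 lt_n; have a2_gt0 : 0 < a ^-2 by rewrite invr_gt0 exprn_gt0.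
have a2_le_n : a ^-2 <= n%:R.
  have /andP[_ /ltW] := truncn_itv (ltW a2_gt0).
  by move/le_trans; apply; rewrite ler_nat.
split=> //; apply: le_trans (ler_wpM2l (ltW a_gt0) a2_le_n).
by rewrite expr2 invfM mulrA divff ?gt_eqF // mul1r invr_ge1 ?unitfE ?gt_eqF.
Qed.

Lemma exists_floor_log (R : realType) (r x : R) : 1 < r -> 1 <= x ->
  exists m : nat, r ^+ m <= x /\ ln x < m.+1%:R * ln r.
Proof.
move=> r_gt1 x_ge1; have ln_r_gt0 : 0 < ln r := ln_gt0 r_gt1.
have q_ge0 : 0 <= ln x / ln r by rewrite divr_ge0 ?ln_ge0 // ltW.
have /andP[le_m lt_m] := truncn_itv q_ge0; exists (Num.Def.trunc (ln x / ln r)); split.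
  have r_pos : r ^+ Num.Def.trunc (ln x / ln r) \in Num.pos.
    by rewrite posrE exprn_gt0 // (lt_trans ltr01).
  rewrite -(ler_ln r_pos) ?posrE ?(lt_le_trans ltr01) // lnXn ?(lt_trans ltr01) //.
  by rewrite -mulr_natl -ler_pdivlMr.
by rewrite -ltr_pdivrMr.
Qed.

Lemma ln_le_double_ln (R : realType) (a x : R) : 0 < a -> a ^-2 <= x ->
  ln x <= 2 * ln (a * x).
Proof.
move=> a_gt0 le_x; have a2_gt0 : 0 < a ^+ 2 by rewrite exprn_gt0.
have ax2_ge1 : 1 <= a ^+ 2 * x by rewrite mulrC -ler_pdivrMr // mul1r.
have x_gt0 : 0 < x by apply: lt_le_trans le_x; rewrite invr_gt0.
rewrite -[2]/(2%:R) mulr_natl -lnXn ?mulr_gt0 // ler_ln ?posrE ?exprn_gt0 ?mulr_gt0 //.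
have -> : (a * x) ^+ 2 = a ^+ 2 * x * x by ring.
by rewrite ler_peMl // ltW.
Qed.

(** * Expectations along the runs of an algorithm *)

Section Runs.
Variables (R : realType) (n : nat) (p : R) (A : algorithm R n).
Hypotheses (p_gt0 : 0 < p) (p_le_half : p <= 1 / 2) (A_valid : valid_alg A).

Local Notation step_prob := (step_prob p A).
Local Notation prefix_prob := (prefix_prob_rec p A).

Definition run_expect (pi : 'S_n) (F : seq bool -> R) (g : seq bool) (d : nat) : R :=
  \sum_(0 <= t < d) \sum_(h : t.-tuple bool) prefix_prob pi g h * F (g ++ h).

Lemma step_prob_ge0 pi g b : 0 <= step_prob pi g b.
Proof.
rewrite /step_prob; case E: (A g) => [i|i j|q] //.
- by move: p_gt0 p_le_half; case: ifP => _; lra.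
- by have /andP[q0 q1] := A_valid E; case: b => /=; lra.
Qed.

Lemma step_prob_le1 pi g : step_prob pi g true + step_prob pi g false <= 1.
Proof.
rewrite /step_prob; case: (A g) => [i|i j|q] /=; first by rewrite addr0 ler01.
  by case: (pi i < pi j)%N => /=; lra.
by lra.
Qed.

Lemma prefix_prob_ge0 pi g h : 0 <= prefix_prob pi g h.
Proof. by elim: h g => [|b h IH] g /=; rewrite ?mulr_ge0 ?step_prob_ge0. Qed.

Lemma run_expect0 pi F g : run_expect pi F g 0 = 0.
Proof. by rewrite /run_expect big_geq. Qed.

Lemma run_expectS pi F g d : run_expect pi F g d.+1 =
  F g + (step_prob pi g true * run_expect pi F (rcons g true) d +
         step_prob pi g false * run_expect pi F (rcons g false) d).
Proof.
pose G s := prefix_prob pi g s * F (g ++ s).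
rewrite /run_expect big_nat_recl // (sum_tuple0 G) /G /= mul1r cats0; congr (_ + _).
rewrite !big_distrr -big_split; apply: eq_bigr => t _ /=.
rewrite (sum_tupleS _ G) big_bool /G /= !big_distrr /=.
by congr (_ + _); apply: eq_bigr => h _; rewrite cat_rcons mulrA.
Qed.

Lemma run_expect_ge0 pi F g d : (forall h, 0 <= F h) -> 0 <= run_expect pi F g d.
Proof.
by move=> F0; do 2![apply: sumr_ge0 => ? _]; rewrite mulr_ge0 ?prefix_prob_ge0.
Qed.

Lemma ler_run_expect pi F G g d :
  (forall h, F h <= G h) -> run_expect pi F g d <= run_expect pi G g d.
Proof.
by move=> FG; do 2![apply: ler_sum => ? _]; rewrite ler_wpM2l ?prefix_prob_ge0.
Qed.

Lemma run_expect_sum pi I (r : seq I) (P : pred I) (F : I -> seq bool -> R) g d :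
  run_expect pi (fun h => \sum_(i <- r | P i) F i h) g d =
  \sum_(i <- r | P i) run_expect pi (F i) g d.
Proof.
rewrite /run_expect exchange_big; apply: eq_bigr => t _.
by rewrite exchange_big; apply: eq_bigr => h _; rewrite mulr_sumr.
Qed.

Lemma run_expectZ pi a F g d :
  run_expect pi (fun h => a * F h) g d = a * run_expect pi F g d.
Proof.
rewrite /run_expect mulr_sumr; apply: eq_bigr => t _.
by rewrite mulr_sumr; apply: eq_bigr => h _; rewrite mulrCA.
Qed.

Lemma run_expectD pi F G g d :
  run_expect pi (fun h => F h + G h) g d = run_expect pi F g d + run_expect pi G g d.
Proof.
rewrite /run_expect -big_split; apply: eq_bigr => t _.
by rewrite -big_split; apply: eq_bigr => h _; rewrite mulrDr.
Qed.

Lemma ler_run_expect_depth pi F g d d' : (forall h, 0 <= F h) -> (d <= d')%N ->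
  run_expect pi F g d <= run_expect pi F g d'.
Proof.
move=> F0 le_dd'; rewrite /run_expect (big_cat_nat (leq0n d) le_dd') /= lerDl.
by do 2![apply: sumr_ge0 => ? _]; rewrite mulr_ge0 ?prefix_prob_ge0.
Qed.

Definition is_output (a : Defs.action R n) : bool := if a is Output _ then true else false.

(* A run outputs at most once, since an output ends it. *)
Lemma run_expect_output_le1 pi F g d :
  (forall h, 0 <= F h <= (is_output (A h))%:R) -> run_expect pi F g d <= 1.
Proof.
move=> F01; have F0 h : 0 <= F h by case/andP: (F01 h).
elim: d g => [|d IH] g; first by rewrite run_expect0.
have step_le1 : F g + (step_prob pi g true + step_prob pi g false) <= 1.
  have := F01 g; have := step_prob_le1 pi g; rewrite /step_prob.
  by case: (A g) => [i|i j|q] /=; rewrite ?mulr1n ?mulr0n; lra.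
have := IH (rcons g true); have := IH (rcons g false).
have := step_prob_ge0 pi g true; have := step_prob_ge0 pi g false.
have := run_expect_ge0 pi (rcons g true) d F0.
have := run_expect_ge0 pi (rcons g false) d F0.
by rewrite run_expectS; nra.
Qed.

Definition indic (Pa : pred (Defs.action R n)) (h : seq bool) : R := (Pa (A h))%:R.

Lemma indic_ge0 Pa h : 0 <= indic Pa h.
Proof. exact: ler0n. Qed.

(* The expected number of steps whose action satisfies [Pa]; both
   [expected_comparisons] and [success_prob] are of this form. *)
Definition run_count (pi : 'S_n) (Pa : pred (Defs.action R n)) : \bar R :=
  (\sum_(0 <= t <oo) (\sum_(h : t.-tuple bool | Pa (A h)) reach_prob p A pi h)%:E)%E.

Lemma run_count_partial pi Pa D :
  \sum_(0 <= t < D) \sum_(h : t.-tuple bool | Pa (A h)) reach_prob p A pi h =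
  run_expect pi (indic Pa) [::] D.
Proof.
apply: eq_bigr => t _; rewrite big_mkcond; apply: eq_bigr => h _.
by rewrite /indic /reach_prob; case: (Pa (A h)); rewrite ?mulr1 ?mulr0.
Qed.

Lemma run_count_term_ge0 pi Pa t :
  0 <= \sum_(h : t.-tuple bool | Pa (A h)) reach_prob p A pi h.
Proof. by apply: sumr_ge0 => h _; apply: prefix_prob_ge0. Qed.

Lemma run_expect_le_count pi Pa D :
  ((run_expect pi (indic Pa) [::] D)%:E <= run_count pi Pa)%E.
Proof.
rewrite -run_count_partial -sumEFin.
by apply: nneseries_lim_ge => t _ _; rewrite lee_fin run_count_term_ge0.
Qed.

Lemma run_count_le pi Pa (Y : \bar R) :
  (forall D, ((run_expect pi (indic Pa) [::] D)%:E <= Y)%E) -> (run_count pi Pa <= Y)%E.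
Proof.
move=> le_Y; apply: lime_le.
  by apply: is_cvg_nneseries => t _ _; rewrite lee_fin run_count_term_ge0.
by apply: nearW => D; rewrite sumEFin run_count_partial.
Qed.

Lemma expected_comparisons_ge0 pi : (0 <= expected_comparisons p A pi)%E.
Proof. by have := run_expect_le_count pi (@is_compare R n) 0; rewrite run_expect0. Qed.

Definition odds : R := (1 - p) / p.

Lemma odds_ge1 : 1 <= odds.
Proof. by rewrite /odds ler_pdivlMr //; move: p_le_half; lra. Qed.

Definition distinguishes (s1 s2 : 'S_n) (a : Defs.action R n) : bool :=
  if a is Compare i j then (s1 i < s1 j)%N != (s2 i < s2 j)%N else false.

Section ChangeOfMeasure.
Variables s1 s2 : 'S_n.

Local Notation dist g := (distinguishes s1 s2 (A g)).

Lemma step_prob_indist g b : ~~ dist g -> step_prob s1 g b = step_prob s2 g b.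
Proof. by rewrite /distinguishes /step_prob; case: (A g) => // i j /negPn/eqP ->. Qed.

Lemma step_prob_dist g b : dist g -> step_prob s1 g b <= odds * step_prob s2 g b.
Proof.
rewrite /distinguishes /step_prob /odds; case: (A g) => // i j.
move: p_gt0 p_le_half; case: (s1 i < s1 j)%N; case: (s2 i < s2 j)%N => //= ? ? _;
  by case: b => /=; rewrite mulrAC ler_pdivlMr //; nra.
Qed.

Fixpoint prob_dist_atleast (j d : nat) (g : seq bool) {struct d} : R :=
  if j is j'.+1 then
    if d is d'.+1 then
      let j_next := if dist g then j' else j in
      step_prob s1 g true * prob_dist_atleast j_next d' (rcons g true) +
      step_prob s1 g false * prob_dist_atleast j_next d' (rcons g false)
    else 0
  else 1.

Lemma prob_dist_atleast0 d g : prob_dist_atleast 0 d g = 1.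
Proof. by case: d. Qed.

Lemma prob_dist_atleast_01 j d g : 0 <= prob_dist_atleast j d g <= 1.
Proof.
elim: d j g => [|d IH] [|j] g //=; rewrite ?lexx ?ler01 //.
set j' := if dist g then j else j.+1.
have /andP[? ?] := IH j' (rcons g true); have /andP[? ?] := IH j' (rcons g false).
have := step_prob_le1 s1 g; have := step_prob_ge0 s1 g true.
have := step_prob_ge0 s1 g false; move=> *.
by apply/andP; split; nra.
Qed.

Lemma prob_dist_atleast_markov j d g :
  j%:R * prob_dist_atleast j d g <= run_expect s1 (indic (distinguishes s1 s2)) g d.
Proof.
elim: d j g => [|d IH] [|j] g; rewrite ?mul0r ?run_expect_ge0 //=; try exact: indic_ge0.
  by rewrite mulr0 run_expect0.
rewrite run_expectS /indic.
have := step_prob_ge0 s1 g true; have := step_prob_ge0 s1 g false.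
case: (dist g) => /=.
  have := IH j (rcons g true); have := IH j (rcons g false).
  have /andP[? ?] := prob_dist_atleast_01 j d (rcons g true).
  have /andP[? ?] := prob_dist_atleast_01 j d (rcons g false).
  by have := step_prob_le1 s1 g; rewrite -natr1; nra.
by have := IH j.+1 (rcons g true); have := IH j.+1 (rcons g false); nra.
Qed.

Variable F : seq bool -> R.
Hypothesis F_output : forall h, 0 <= F h <= (is_output (A h))%:R.

(* Runs with at most [m] distinguishing comparisons are at most [odds ^+ m]
   times likelier on [s1] than on [s2]. *)
Lemma run_expect_change_measure m d g :
  run_expect s1 F g d <= odds ^+ m * run_expect s2 F g d + prob_dist_atleast m.+1 d g.
Proof.
have F0 h : 0 <= F h by case/andP: (F_output h).
elim: d m g => [|d IH] m g; first by rewrite !run_expect0 mulr0 addr0.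
have oddsm_ge1 m' : 1 <= odds ^+ m' by rewrite exprn_ege1 ?odds_ge1.
rewrite !run_expectS /=.
have S1_ge0 b := run_expect_ge0 s1 (rcons g b) d F0.
have S2_ge0 b := run_expect_ge0 s2 (rcons g b) d F0.
have st_ge0 b := step_prob_ge0 s1 g b.
case D: (dist g).
  have Fg0 : F g = 0.
    apply/eqP; rewrite eq_le F0 andbT; move: (F_output g) D.
    by rewrite /distinguishes; case: (A g) => //= i j /andP[_ Fg] _.
  rewrite Fg0 add0r; case: m => [|m].
    have S1_le1 b := run_expect_output_le1 s1 (rcons g b) d F_output.
    rewrite expr0 mul1r /= !prob_dist_atleast0.
    have [? ?] := (S1_le1 true, S1_le1 false).
    have [? ?] := (st_ge0 true, st_ge0 false).
    have [? ?] := (S2_ge0 true, S2_ge0 false).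
    by have := step_prob_ge0 s2 g true; have := step_prob_ge0 s2 g false; nra.
  have step b : step_prob s1 g b * run_expect s1 F (rcons g b) d <=
      odds ^+ m.+1 * (step_prob s2 g b * run_expect s2 F (rcons g b) d) +
      step_prob s1 g b * prob_dist_atleast m.+1 d (rcons g b).
    have oS2 : 0 <= odds ^+ m * run_expect s2 F (rcons g b) d.
      by rewrite mulr_ge0 // (le_trans ler01).
    have := IH m (rcons g b); have := step_prob_dist b D; have := st_ge0 b.
    by rewrite exprS -mulrA; nra.
  by have := step true; have := step false; lra.
have D' : ~~ dist g by rewrite D.
rewrite !(step_prob_indist _ D').
have step b : step_prob s2 g b * run_expect s1 F (rcons g b) d <=
    odds ^+ m * (step_prob s2 g b * run_expect s2 F (rcons g b) d) +
    step_prob s2 g b * prob_dist_atleast m.+1 d (rcons g b).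
  by have := IH m (rcons g b); have := step_prob_ge0 s2 g b; nra.
have := step true; have := step false.
by have := oddsm_ge1 m; have := F0 g; nra.
Qed.

Lemma run_expect_change_measure_markov m d g :
  run_expect s1 F g d <= odds ^+ m * run_expect s2 F g d +
                         run_expect s1 (indic (distinguishes s1 s2)) g d / m.+1%:R.
Proof.
apply: (le_trans (run_expect_change_measure m d g)); rewrite lerD2l.
by rewrite ler_pdivlMr ?ltr0n // mulrC prob_dist_atleast_markov.
Qed.

End ChangeOfMeasure.

(** * Perturbations of the sorted input *)

Definition outputs_in (W : pred 'I_n) (a : Defs.action R n) : bool :=
  if a is Output i then W i else false.

Lemma run_expect_wrong_output_le (pi : 'S_n) k (W : pred 'I_n) dl D :
  (forall i, W i -> (k <= pi i)%N) ->
  ((1 - dl)%:E <= success_prob p A pi k)%E ->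
  run_expect pi (indic (outputs_in W)) [::] D <= dl.
Proof.
move=> W_wrong succ.
suff : (success_prob p A pi k <= (1 - run_expect pi (indic (outputs_in W)) [::] D)%:E)%E.
  by move/(le_trans succ); rewrite lee_fin; lra.
apply: (@run_count_le pi (outputs_topk pi k)) => D'; rewrite lee_fin.
have le1 : run_expect pi (fun h => indic (outputs_in W) h + indic (outputs_topk pi k) h)
                      [::] (maxn D D') <= 1.
  apply: run_expect_output_le1 => h; rewrite /indic.
  case: (A h) => [i|i j|q] /=; rewrite ?addr0 ?lexx //.
  case Wi: (W i); last by rewrite add0r ler0n ler_nat leq_b1.
  by rewrite ltnNge W_wrong //= addr0 ler01 lexx.
have := ler_run_expect_depth pi [::] (indic_ge0 (outputs_in W)) (leq_maxl D D').
have := ler_run_expect_depth pi [::] (indic_ge0 (outputs_topk pi k)) (leq_maxr D D').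
by rewrite run_expectD in le1; lra.
Qed.

(* Outputs in [W l] are frequent on [sg] but wrong on [pis l], so the run on
   [sg] must tell [sg] apart from every [pis l], while one comparison tells
   [sg] apart from at most [M] of them. *)
Lemma perturbation_bound (sg : 'S_n) (k g M m : nat) (pis : 'I_g -> 'S_n)
    (W : 'I_g -> pred 'I_n) (mult dl e : R) :
  0 < mult ->
  (forall l i, W l i -> (k <= pis l i)%N) ->
  (forall i, mult * (sg i < k)%N%:R <= \sum_(l < g) (W l i)%:R) ->
  (forall i j, \sum_(l < g) ((sg i < sg j)%N != (pis l i < pis l j)%N)%:R <= M%:R :> R) ->
  (forall pi, ((1 - dl)%:E <= success_prob p A pi k)%E) ->
  expected_comparisons p A sg = e%:E ->
  mult * (1 - dl) <= g%:R * (odds ^+ m * dl) + M%:R * e / m.+1%:R.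
Proof.
move=> mult_gt0 W_wrong W_cover M_bound succ Ee.
set Y := (X in _ <= X).
suff bound D : mult * run_expect sg (indic (outputs_topk sg k)) [::] D <= Y.
  have : (success_prob p A sg k <= (Y / mult)%:E)%E.
    apply: (@run_count_le sg (outputs_topk sg k)) => D.
    by rewrite lee_fin ler_pdivlMr // mulrC bound.
  by move/(le_trans (succ sg)); rewrite lee_fin ler_pdivlMr // mulrC.
pose dist_l (l : 'I_g) := indic (distinguishes sg (pis l)).
have covered : mult * run_expect sg (indic (outputs_topk sg k)) [::] D <=
    \sum_(l < g) run_expect sg (indic (outputs_in (W l))) [::] D.
  rewrite -run_expectZ -run_expect_sum; apply: ler_run_expect => h.
  by rewrite /indic; case: (A h) => [i|i j|q] /=; rewrite ?mulr0 ?sumr_ge0.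
have changed l : run_expect sg (indic (outputs_in (W l))) [::] D <=
    odds ^+ m * dl + run_expect sg (dist_l l) [::] D / m.+1%:R.
  have W_output h : 0 <= indic (outputs_in (W l)) h <= (is_output (A h))%:R.
    rewrite /indic; case: (A h) => [i|i j|q] /=; rewrite ?lexx //.
    by rewrite ler0n ler_nat leq_b1.
  apply: le_trans (run_expect_change_measure_markov sg (pis l) W_output m D [::]) _.
  rewrite lerD2r ler_wpM2l ?exprn_ge0 ?(le_trans ler01 odds_ge1) //.
  by apply: run_expect_wrong_output_le; [apply: W_wrong | apply: succ].
have dist_sum : \sum_(l < g) run_expect sg (dist_l l) [::] D <=
    M%:R * run_expect sg (indic (@is_compare R n)) [::] D.
  rewrite -run_expectZ -run_expect_sum; apply: ler_run_expect => h.
  rewrite /dist_l /indic /distinguishes /is_compare.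
  by case: (A h) => [i|i j|q]; rewrite ?mulr1 ?M_bound // big1 ?mulr0.
have comparisons : run_expect sg (indic (@is_compare R n)) [::] D <= e.
  by rewrite -lee_fin -Ee run_expect_le_count.
apply: (le_trans covered); apply: (le_trans (ler_sum _ (fun l _ => changed l))).
rewrite big_split /= sumr_const card_ord -mulr_suml /Y [g%:R * _]mulr_natl lerD2l.
rewrite ler_pM2r ?invr_gt0 ?ltr0n //; apply: (le_trans dist_sum).
by rewrite ler_wpM2l ?ler0n.
Qed.

(* Perturbation [l] moves the block of ranks [[(l+1) k, (l+2) k)] to the
   front: then every element outside that block, in particular each of the
   [k] smallest ones, becomes a wrong answer. *)
Lemma blocks_bound k m dl e : (0 < k)%N -> (2 * k <= n)%N ->
  (forall pi, ((1 - dl)%:E <= success_prob p A pi k)%E) ->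
  expected_comparisons p A 1 = e%:E ->
  ((n %/ k).-1)%N%:R * (1 - dl) <= ((n %/ k).-1)%N%:R * (odds ^+ m * dl) + 2%:R * e / m.+1%:R.
Proof.
move=> k_gt0 le_2k_n succ Ee; set g := ((n %/ k).-1)%N.
pose b (l : 'I_g) := (l.+1 * k)%N.
have b_le l : (b l + k <= n)%N.
  rewrite /b -mulSnr; apply: leq_trans (leq_divM n k); rewrite leq_mul2r.
  by have := ltn_ord l; rewrite /g; lia.
pose W (l : 'I_g) (i : 'I_n) := ~~ (b l <= i < b l + k)%N.
apply: (@perturbation_bound 1 k g 2 m
  (fun l => rot_perm n 0 (b l + k) k) W) => //.
- by rewrite ltr0n /g -subn1 subn_gt0 leq_divRL.
- move=> l i Wi; rewrite rot_permE; apply: block_rot_rank_ge => //.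
  by rewrite /b leq_pmull.
- move=> i; rewrite perm1; case: ltnP => [lt_ik | _]; last by rewrite mulr0 sumr_ge0.
  rewrite mulr1 (eq_bigr (fun _ => 1)) ?sumr_const ?card_ord // => l _.
  by rewrite /W /b negb_and -ltnNge (leq_trans lt_ik) ?leq_pmull.
- move=> i j; rewrite !perm1.
  pose hit (x : nat) (l : 'I_g) : R := ((l : nat) == (x %/ k).-1)%N%:R.
  apply: (@le_trans _ _ (\sum_(l < g) (hit i l + hit j l))); last first.
    by rewrite big_split -[2%:R]/(1 + 1 : R) lerD ?sum_ord_eq_le1.
  apply: ler_sum => l _; rewrite !rot_permE.
  case: (boolP (_ != _)) => [/block_rot_order | _]; last by rewrite addr_ge0.
  rewrite !mem_block_div // /hit => /orP[] /eqP -> /=; rewrite eqxx.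
    by rewrite lerDl ler0n.
  by rewrite lerDr ler0n.
Qed.

(* When [n < 2 k], perturbation [l] moves a window of [n - k] ranks among
   the [k] smallest ones to the end; the windows cover all [k] smallest. *)
Lemma windows_bound k m dl e : (k < n)%N -> (n < 2 * k)%N ->
  (forall pi, ((1 - dl)%:E <= success_prob p A pi k)%E) ->
  expected_comparisons p A 1 = e%:E ->
  1 - dl <= (k %/ (n - k)).+1%:R * (odds ^+ m * dl) +
            (k %/ (n - k)).+1%:R * e / m.+1%:R.
Proof.
move=> lt_kn lt_n_2k succ Ee; set s := (n - k)%N; set L := (k %/ s).+1%N.
have s_gt0 : (0 < s)%N by rewrite subn_gt0.
have le_sk : (s <= k)%N by rewrite /s; lia.
pose a (l : 'I_L) := minn (l * s) (k - s).
pose W (l : 'I_L) (i : 'I_n) := (a l <= i < a l + s)%N.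
rewrite -[1 - dl]mul1r.
apply: (@perturbation_bound 1 k L L m
  (fun l => rot_perm n (a l) n (k - a l)) W) => //.
- move=> l i Wi; rewrite rot_permE; apply: window_rot_rank_ge => //; first exact: ltnW.
  by have := geq_minr (l * s) (k - s); rewrite -/(a l) /s; lia.
- move=> i; rewrite perm1 mul1r; case: ltnP => [lt_ik | _]; last by rewrite sumr_ge0.
  have lt_l0 : (i %/ s < L)%N by rewrite ltnS leq_div2r // ltnW.
  rewrite (bigD1 (Ordinal lt_l0)) //= /W /a /= mem_window //.
  by rewrite lerDl sumr_ge0.
- move=> i j; apply: (@le_trans _ _ (\sum_(l < L) 1)).
    by apply: ler_sum => l _; rewrite lern1 leq_b1.
  by rewrite sumr_const card_ord.
Qed.

Lemma blocks_lower_bound k m e : (16 <= n)%N -> (0 < k)%N -> (2 * k <= n)%N ->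
  odds ^+ m <= n%:R / 4 -> solves_ftmin_whp p A k -> expected_comparisons p A 1 = e%:E ->
  n%:R / k%:R / 16 <= e / m.+1%:R.
Proof.
move=> n_ge16 k_gt0 le_2k_n odds_le A_solves Ee.
have n_ge16R : 16 <= n%:R :> R by rewrite (ler_nat R 16).
have := blocks_bound m k_gt0 le_2k_n A_solves Ee; rewrite -mulrA.
set G : R := ((n %/ k).-1)%N%:R; set dl := (n%:R : R)^-1; set y := e / _ => bound.
have dl_small : 0 <= dl <= 1 / 16.
  by rewrite invr_ge0 ler0n /= mul1r lef_pV2 ?posrE //; lra.
have odds_dl : odds ^+ m * dl <= 1 / 4.
  by rewrite -ler_pdivlMr ?invr_gt0 ?(lt_le_trans _ n_ge16R) // invrK mul1r mulrC.
have G_le : G <= 4 * y.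
  have : G * (1 / 2) <= G * (1 - dl - odds ^+ m * dl) by rewrite ler_wpM2l ?ler0n //; lra.
  by lra.
have : n%:R / k%:R <= 4 * G.
  by rewrite ler_pdivrMr ?ltr0n // -(natrM R 4) -natrM ler_nat leq_mul4_pred_divn.
by lra.
Qed.

Lemma windows_lower_bound c k m e : 0 < c < 1 -> (16 <= n)%N -> k%:R <= c * n%:R ->
  (n < 2 * k)%N -> odds ^+ m <= (1 - c) / 4 * n%:R ->
  solves_ftmin_whp p A k -> expected_comparisons p A 1 = e%:E ->
  (1 - c) / 2 <= e / m.+1%:R.
Proof.
move=> /andP[c_gt0 c_lt1] n_ge16 le_k_cn lt_n_2k odds_le A_solves Ee.
have n_gt0 : 0 < n%:R :> R by rewrite ltr0n (leq_trans _ n_ge16).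
have lt_kn : (k < n)%N by rewrite -(ltr_nat R) (le_lt_trans le_k_cn) // gtr_pMl.
have := windows_bound m lt_kn lt_n_2k A_solves Ee; rewrite -mulrA.
set L : R := (k %/ (n - k)).+1%N%:R; set dl := (n%:R : R)^-1; set y := e / _ => bound.
have L_gt0 : 0 < L by rewrite ltr0n.
have L_c : L * (1 - c) <= 1.
  rewrite -(ler_pM2r n_gt0) mul1r -mulrA.
  have s_ge : (1 - c) * n%:R <= (n - k)%N%:R by rewrite natrB ?(ltnW lt_kn) //; lra.
  apply: le_trans (ler_wpM2l (ltW L_gt0) s_ge) _; rewrite -natrM ler_nat mulSnr.
  by rewrite -[X in (_ <= X)%N](subnKC (ltnW lt_kn)) leq_add2r leq_divM.
have dl_small : dl <= 1 / 16 by rewrite mul1r lef_pV2 ?posrE // (ler_nat R 16).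
have : L * (odds ^+ m * dl) <= L * ((1 - c) / 4).
  by rewrite ler_wpM2l ?(ltW L_gt0) // -ler_pdivlMr ?invr_gt0 // invrK.
by move=> Lodds; rewrite -(ler_pM2l L_gt0); lra.
Qed.

Lemma expected_comparisons_lower_bound c k m e :
  0 < c < 1 -> (16 <= n)%N -> (0 < k)%N -> k%:R <= c * n%:R ->
  odds ^+ m <= (1 - c) / 4 * n%:R ->
  solves_ftmin_whp p A k -> expected_comparisons p A 1 = e%:E ->
  (1 - c) / 16 * m.+1%:R * (n%:R / k%:R) <= e.
Proof.
move=> c01 n_ge16 k_gt0 le_k_cn odds_le A_solves Ee; have /andP[c_gt0 c_lt1] := c01.
have nk_ge0 : 0 <= n%:R / k%:R :> R by rewrite divr_ge0 ?ler0n.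
rewrite mulrAC -ler_pdivlMr ?ltr0n //.
case: (leqP (2 * k) n) => [le_2k_n | lt_n_2k].
  apply: le_trans (blocks_lower_bound n_ge16 k_gt0 le_2k_n _ A_solves Ee).
    by rewrite mulrC ler_wpM2l //; lra.
  by apply: le_trans odds_le _; rewrite mulrC ler_wpM2l ?ler0n //; lra.
apply: le_trans (windows_lower_bound c01 n_ge16 le_k_cn lt_n_2k odds_le A_solves Ee).
have nk_le : n%:R / k%:R <= 2 :> R by rewrite ler_pdivrMr ?ltr0n // -natrM ler_nat ltnW.
apply: le_trans (_ : (1 - c) / 16 * 2 <= _); last by lra.
by rewrite ler_wpM2l //; lra.
Qed.

End Runs.

Theorem corollary4 (R : realType) (p c : R) :
  0 < p < 1 / 2 -> 0 < c < 1 ->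
  exists C : R, 0 < C /\
  exists n0 : nat, forall n k : nat,
    (n0 <= n)%N -> (1 <= k)%N -> k%:R <= c * n%:R ->
    forall A : algorithm R n, valid_alg A -> solves_ftmin_whp p A k ->
    exists pi : 'S_n,
      ((C * (n%:R / k%:R) * ln (n%:R : R))%:E <= expected_comparisons p A pi)%E.
Proof.
move=> /andP[p_gt0 lt_p_half] c01; have /andP[c_gt0 c_lt1] := c01.
have p_le_half : p <= 1 / 2 by rewrite ltW.
have odds_gt1 : 1 < odds p by rewrite /odds ltr_pdivlMr // mul1r; lra.
have ln_odds_gt0 : 0 < ln (odds p) := ln_gt0 odds_gt1.
set a : R := (1 - c) / 4; have a01 : 0 < a <= 1 by rewrite /a; apply/andP; split; lra.
exists ((1 - c) / (32 * ln (odds p))); split; first by rewrite divr_gt0 ?mulr_gt0 //; lra.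
exists (maxn 16 (Num.Def.trunc (a ^-2)).+1).
move=> n k; rewrite geq_max => /andP[n_ge16 /(natr_ge_inv_sqr a01)[a2_le_n an_ge1]].
move=> k_gt0 le_k_cn A A_valid A_solves; exists 1%g.
case Ee: (expected_comparisons p A 1) => [e| |]; last 2 first.
- by rewrite leey.
- by have := expected_comparisons_ge0 p_gt0 p_le_half A_valid 1; rewrite Ee.
have [m [odds_le ln_lt]] := exists_floor_log odds_gt1 an_ge1.
have ln_n_le : ln n%:R <= 2 * (m.+1%:R * ln (odds p)).
  have [a_gt0 _] := andP a01.
  by apply: le_trans (ln_le_double_ln a_gt0 a2_le_n) _; rewrite ler_pM2l // ltW.
rewrite lee_fin; apply: le_trans (expected_comparisons_lower_bound p_gt0 p_le_half
  A_valid c01 n_ge16 k_gt0 le_k_cn odds_le A_solves Ee).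
have -> : (1 - c) / 16 * m.+1%:R * (n%:R / k%:R) =
    (1 - c) / (32 * ln (odds p)) * (n%:R / k%:R) * (2 * (m.+1%:R * ln (odds p))).
  by field; rewrite pnatr_eq0 -lt0n k_gt0 gt_eqF.
rewrite ler_wpM2l // mulr_ge0 ?divr_ge0 ?ler0n ?mulr_ge0 ?(ltW ln_odds_gt0) //.
by rewrite subr_ge0 ltW.
Qed.
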